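(* Let $\Gamma=\mathsf{PSL}_2(\mathbb{Z})=\langle U,S\mid U^3,S^2\rangle$, with $U$ of order $3$ and $S$ of order $2$. For $n\ge 0$ let $t(n)$ be the number of words of length $n$ in the alphabet $\{U,S\}$ that are equal to the identity in $\Gamma$. Then for every prime $p>3$, $t(p)\equiv 0 \pmod p$.
   Context: A word of length $n$ is a sequence of $n$ letters each equal to $U$ or $S$, read as the product of the corresponding elements of $\Gamma$. *)

From HB Require Import structures.
From mathcomp Require Import all_boot all_order all_algebra.
Set Implicit Arguments. Unset Strict Implicit. Unset Printing Implicit Defensive.
Import GRing.Theory Num.Theory.
Local Open Scope ring_scope.

Definition mx2 (a b c d : int) : 'M[int]_2 :=
  \matrix_(i < 2, j < 2)
    (if (i == 0 :> nat) then (if (j == 0 :> nat) then a else b)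
     else (if (j == 0 :> nat) then c else d)).

(* Lifts in SL_2(Z) of the generators of PSL_2(Z):
   S = [[0,-1],[1,0]] (order 2 in PSL_2), U = [[0,-1],[1,1]] (order 3 in PSL_2). *)
Definition matS : 'M[int]_2 := mx2 0 (-1) 1 0.
Definition matU : 'M[int]_2 := mx2 0 (-1) 1 1.

Definition letter (b : bool) : 'M[int]_2 := if b then matU else matS.

Definition wordval (w : seq bool) : 'M[int]_2 :=
  foldr (fun b M => letter b *m M) 1%:M w.

(* A matrix of SL_2(Z) is trivial in PSL_2(Z) = SL_2(Z)/{±I} *)
Definition trivial_in_PSL (M : 'M[int]_2) : bool :=
  (M == 1%:M) || (M == - 1%:M).

Definition t (n : nat) : nat :=
  #|[set w : n.-tuple bool | trivial_in_PSL (wordval w)]|.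

From mathcomp Require Import all_boot all_order all_algebra.
From mathcomp Require Import fingroup perm action cyclic pgroup sylow.
Set Implicit Arguments. Unset Strict Implicit. Unset Printing Implicit Defensive.
Import GRing.Theory.
Local Open Scope ring_scope.

(* Cyclic rotation of words of length p is an action of a group of order p
   on the set of trivial words, since being trivial in PSL_2(Z) is invariant
   under conjugation.  A p-group acting on a finite set fixes as many points
   as the set has, modulo p; the fixed words are the constant ones, and U^p,
   S^p are nontrivial because p is prime to 2 and 3.  Hence t(p) = 0 mod p. *)

Lemma mx2_mul a b c d a' b' c' d' :
  mx2 a b c d *m mx2 a' b' c' d' =
  mx2 (a * a' + b * c') (a * b' + b * d') (c * a' + d * c') (c * b' + d * d').
Proof.
apply/matrixP => i j; rewrite !mxE !big_ord_recl big_ord0 !mxE addr0.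
by case: i => [[|[|//]] ?]; case: j => [[|[|//]] ?].
Qed.

Lemma mx2_1 : 1%:M = mx2 1 0 0 1.
Proof.
apply/matrixP => i j; rewrite !mxE.
by case: i => [[|[|//]] ?]; case: j => [[|[|//]] ?].
Qed.

Lemma mx2_opp a b c d : - mx2 a b c d = mx2 (- a) (- b) (- c) (- d).
Proof.
apply/matrixP => i j; rewrite !mxE.
by case: i => [[|[|//]] ?]; case: j => [[|[|//]] ?].
Qed.

Lemma mx2_eq a b c d a' b' c' d' :
  (mx2 a b c d == mx2 a' b' c' d') = [&& a == a', b == b', c == c' & d == d'].
Proof.
apply/eqP/and4P => [E|[/eqP-> /eqP-> /eqP-> /eqP->]] //.
have entry i j : mx2 a b c d i j = mx2 a' b' c' d' i j by rewrite E.
move: (entry 0 0) (entry 0 1) (entry 1 0) (entry 1 1).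
by rewrite !mxE /= => -> -> -> ->.
Qed.

Lemma matS_sqr : matS ^+ 2 = -1.
Proof. by rewrite expr2 -mulmxE -idmxE /matS mx2_mul mx2_1 mx2_opp. Qed.

Lemma matU_cube : matU ^+ 3 = -1.
Proof.
by rewrite !exprS expr0 mulr1 -!mulmxE -idmxE /matU !mx2_mul mx2_1 mx2_opp.
Qed.

Lemma trivial_in_PSL_opp M : trivial_in_PSL (- M) = trivial_in_PSL M.
Proof. by rewrite /trivial_in_PSL eqr_oppLR [- M == _]eqr_oppLR opprK orbC. Qed.

Lemma trivial_in_PSL_mulC A B :
  trivial_in_PSL (A *m B) = trivial_in_PSL (B *m A).
Proof.
suff triv_mulC X Y : trivial_in_PSL (X *m Y) -> trivial_in_PSL (Y *m X).
  by apply/idP/idP; apply: triv_mulC.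
case/orP=> /eqP XY; rewrite /trivial_in_PSL.
  by rewrite (mulmx1C XY) eqxx.
have /mulmx1C : X *m - Y = 1%:M by rewrite mulmxN XY opprK.
by rewrite mulNmx => /eqP; rewrite eqr_oppLR => ->; rewrite orbT.
Qed.

Lemma trivial_in_PSL_exp_mod A k n : A ^+ k = -1 ->
  trivial_in_PSL (A ^+ n) = trivial_in_PSL (A ^+ (n %% k)).
Proof.
move=> Ak; rewrite {1}(divn_eq n k) exprD mulnC exprM Ak -signr_odd mulr_sign.
by case: (odd _); rewrite ?mulN1r ?mul1r ?trivial_in_PSL_opp.
Qed.

Lemma wordval_cat w w' : wordval (w ++ w') = wordval w *m wordval w'.
Proof. by elim: w => [|b w IH] /=; rewrite ?mul1mx // IH mulmxA. Qed.

Lemma wordval_nseq n b : wordval (nseq n b) = letter b ^+ n.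
Proof. by elim: n => [|n IH] /=; rewrite ?idmxE // IH exprS mulmxE. Qed.

Lemma trivial_in_PSL_rot n w :
  trivial_in_PSL (wordval (rot n w)) = trivial_in_PSL (wordval w).
Proof.
by rewrite /rot wordval_cat trivial_in_PSL_mulC -wordval_cat cat_take_drop.
Qed.

Local Close Scope ring_scope.

Lemma nontrivial_letter_exp_prime b p : prime p -> 3 < p ->
  ~~ trivial_in_PSL (letter b ^+ p)%R.
Proof.
move=> p_pr p_gt3; case: b => /=.
  rewrite (trivial_in_PSL_exp_mod p matU_cube).
  have : ~~ (3 %| p) by apply: contraTN p_gt3 => /(prime_nt_dvdP p_pr) <-.
  rewrite /dvdn; have : p %% 3 < 3 by rewrite ltn_mod.
  case: (p %% 3) => [|[|[|//]]] // _ _;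
    by rewrite ?expr1 ?expr2 -?mulmxE /trivial_in_PSL /matU ?mx2_mul mx2_1
               mx2_opp !mx2_eq.
rewrite (trivial_in_PSL_exp_mod p matS_sqr) modn2.
have -> : odd p by case: (even_prime p_pr) p_gt3 => [->|].
by rewrite expr1 /trivial_in_PSL /matS mx2_1 mx2_opp !mx2_eq.
Qed.

Lemma rot1_fixed_nseq (T : Type) (x0 : T) s :
  rot 1 s = s -> s = nseq (size s) (head x0 s).
Proof.
case: s => [|x s] //=; rewrite rot1_cons.
elim: s => [|y s IH] //= [->] fixed.
by congr cons; apply: IH.
Qed.

Section RotationPerm.
Variables (n : nat) (T : finType).

Definition rot1_tuple (w : n.-tuple T) : n.-tuple T := rot_tuple 1 w.

Lemma rot1_tuple_inj : injective rot1_tuple.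
Proof. by move=> w1 w2 /(congr1 val) /rot_inj; apply: val_inj. Qed.

Definition rot_perm : {perm n.-tuple T} := perm rot1_tuple_inj.

Lemma rot_permX k (w : n.-tuple T) :
  k <= n -> val ((rot_perm ^+ k)%g w) = rot k w.
Proof.
rewrite permX; elim: k => [_|k IH k_lt_n]; first by rewrite rot0.
rewrite iterS permE /= (IH (ltnW k_lt_n)).
by rewrite -rotD ?add1n // size_tuple.
Qed.

Lemma rot_perm_order : (rot_perm ^+ n = 1)%g.
Proof.
apply/permP => w; apply: val_inj.
by rewrite perm1 rot_permX // -{1}(size_tuple w) rot_size.
Qed.

Lemma rot_perm_pgroup : prime n -> (n.-group <[rot_perm]>)%g.
Proof.
move=> n_pr; rewrite /pgroup -orderE; apply: pnat_dvd (pnat_id n_pr).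
by rewrite order_dvdn rot_perm_order.
Qed.

End RotationPerm.

Theorem proposition1 (p : nat) : prime p -> 3 < p -> t p %% p = 0.
Proof.
move=> p_pr p_gt3.
set S := [set w : p.-tuple bool | trivial_in_PSL (wordval w)].
have S_rot_stable : [acts <[rot_perm p bool]>%g, on S | 'P].
  rewrite cycle_subG; apply/astabsP => w.
  by rewrite /= !inE /aperm permE trivial_in_PSL_rot.
have no_fixed : ('Fix_(S | 'P)(<[rot_perm p bool]>) = set0)%g.
  apply/setP => w; rewrite !inE; apply/negbTE/andP => -[Sw].
  move/subsetP/(_ _ (cycle_id _)); rewrite inE /= /aperm permE => /eqP/(congr1 val).
  move=> /(rot1_fixed_nseq true) w_const; move: Sw.
  by rewrite w_const size_tuple wordval_nseq
             (negPf (nontrivial_letter_exp_prime _ p_pr p_gt3)).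
have := pgroup_fix_mod (rot_perm_pgroup bool p_pr) S_rot_stable.
rewrite no_fixed cards0 mod0n; exact: id.
Qed.
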